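(* Let $m\ge 5$ and $H=\Theta(l_1,\ldots,l_m)$ with $l_1=2$ and $l_2=\cdots=l_m=4$, and let $G=H^2$. Then $G$ is equitably $(m+2)$-choosable.
   Context: $\Theta(l_1,\ldots,l_m)$ denotes the graph consisting of two vertices $u,w$ joined by $m$ internally disjoint paths of lengths $l_1,\ldots,l_m$. For a graph $H$, $H^2$ has vertex set $V(H)$ with two vertices adjacent iff their distance in $H$ is 1 or 2. A $k$-assignment $L$ assigns to each vertex a set of exactly $k$ colors; an equitable $L$-coloring of $G$ is a proper coloring $f$ with $f(v)\in L(v)$ such that no color is used more than $\lceil |V(G)|/k\rceil$ times; $G$ is equitably $k$-choosable if it has an equitable $L$-coloring for every $k$-assignment $L$. *)

From mathcomp Require Import all_boot.
Set Implicit Arguments. Unset Strict Implicit. Unset Printing Implicit Defensive.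

(* Vertices of Theta(l_0,...,l_{m-1}): the two ends u (= inl false) and
   w (= inl true), plus, for each path i, its l i - 1 internal vertices
   (i, j) with j : 'I_(l i).-1; internal vertex (i,j) is at distance j+1
   from u along path i. *)
Definition theta_V (m : nat) (l : 'I_m -> nat) : finType :=
  (bool + {i : 'I_m & 'I_(l i).-1})%type.

Definition theta_end_adj (m : nat) (l : 'I_m -> nat) (b : bool)
    (p : {i : 'I_m & 'I_(l i).-1}) : bool :=
  if b then (val (tagged p)).+2 == l (tag p) else val (tagged p) == 0.

Definition theta_adj (m : nat) (l : 'I_m -> nat) : rel (theta_V l) :=
  fun x y =>
    match x, y with
    | inl a, inl b => (a != b) && [exists i, l i == 1]
    | inl a, inr q => @theta_end_adj m l a q
    | inr p, inl b => @theta_end_adj m l b p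
    | inr p, inr q =>
        (tag p == tag q) &&
        (((val (tagged p)).+1 == val (tagged q)) ||
         ((val (tagged q)).+1 == val (tagged p)))
    end.

Definition graph_sq (T : finType) (e : rel T) : rel T :=
  fun x y => (x != y) && (e x y || [exists z, e x z && e z y]).

Definition ceil_div (n k : nat) : nat := (n + k.-1) %/ k.

(* equitable k-choosability; colours range over an arbitrary finite type
   (only finitely many colours occur in any list assignment) *)
Definition equitably_choosable (T : finType) (e : rel T) (k : nat) : Prop :=
  forall (C : finType) (L : T -> {set C}),
    (forall v, #|L v| = k) ->
    exists f : T -> C,
      (forall v, f v \in L v) /\
      (forall x y, e x y -> f x != f y) /\
      (forall c, #|[set v | f v == c]| <= ceil_div #|T| k).

(* lengths l_1 = 2, l_2 = ... = l_m = 4 (0-indexed) *)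
Definition theta_lens (m : nat) : 'I_m -> nat :=
  fun i => if val i == 0 then 2 else 4.

(* The vertices of H are the two ends u and w, the middle vertex x of the path
   of length 2, and, on each path i >= 1 of length 4, the vertices a_i, b_i,
   c_i at distance 1, 2, 3 from u.  They fall into three parts {u, x, a_i},
   {w, c_i} and {b_i}.  Let G' be G with each part turned into a clique.  A
   proper L-colouring of G' uses each colour at most once per part, hence at
   most 3 <= ceil(3m / (m+2)) times, so it is an equitable L-colouring of G
   (equitable_of_part_colouring).  It remains to list-colour G' from lists of
   size m+2, which is done greedily (greedy_colouring): precolour x and b_1
   with colours p and q chosen so that c_1 loses at most one colour to them
   (choose_two_colours), then colour b_i (i <> 1), u, w, a_i (i <> 1),
   c_i (i <> 1), a_1, c_1 in this order; every vertex then has fewer coloured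
   neighbours than available colours. *)

From HB Require Import structures.
From mathcomp Require Import all_boot zify.
Set Implicit Arguments. Unset Strict Implicit. Unset Printing Implicit Defensive.

Lemma graph_sq_sym (T : finType) (e : rel T) : symmetric e -> symmetric (graph_sq e).
Proof.
move=> e_sym x y; rewrite /graph_sq eq_sym e_sym; congr (_ && (_ || _)).
by apply/existsP/existsP=> -[z /andP[exz ezy]]; exists z; rewrite e_sym ezy e_sym exz.
Qed.

Lemma graph_sq_irr (T : finType) (e : rel T) : irreflexive (graph_sq e).
Proof. by move=> x; rewrite /graph_sq eqxx. Qed.

Definition with_part_cliques (T K : finType) (e : rel T) (part : T -> K) : rel T :=
  fun x y => e x y || (x != y) && (part x == part y).

Lemma with_part_cliques_sym (T K : finType) (e : rel T) (part : T -> K) :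
  symmetric e -> symmetric (with_part_cliques e part).
Proof. by move=> e_sym x y; rewrite /with_part_cliques e_sym eq_sym (eq_sym (part x)). Qed.

Lemma with_part_cliques_irr (T K : finType) (e : rel T) (part : T -> K) :
  irreflexive e -> irreflexive (with_part_cliques e part).
Proof. by move=> e_irr x; rewrite /with_part_cliques e_irr eqxx. Qed.

Lemma colour_class_le_parts (T K C : finType) (part : T -> K) (f : T -> C) :
  (forall x y, x != y -> part x = part y -> f x != f y) ->
  forall c, #|[set v | f v == c]| <= #|K|.
Proof.
move=> f_inj c; apply: (@leq_card_in _ _ part) => x y; rewrite !inE.
move=> /eqP fx /eqP fy pxy; apply/eqP/negPn/negP => nxy.
by move: (f_inj x y nxy pxy); rewrite fx fy eqxx.
Qed.

Lemma equitable_of_part_colouring (T K : finType) (e : rel T) (part : T -> K) (k : nat) :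
  #|K| <= ceil_div #|T| k ->
  (forall (C : finType) (L : T -> {set C}), (forall v, #|L v| = k) ->
     exists f : T -> C, (forall v, f v \in L v) /\
       (forall x y, with_part_cliques e part x y -> f x != f y)) ->
  equitably_choosable e k.
Proof.
move=> le_K_ceil colourable C L sizeL; have [f [fL f_ok]] := colourable C L sizeL.
exists f; split=> //; split=> [x y exy|c]; first by apply: f_ok; rewrite /with_part_cliques exy.
apply: leq_trans (colour_class_le_parts (part := part) _ _) le_K_ceil.
by move=> x y nxy /eqP pxy; apply: f_ok; rewrite /with_part_cliques nxy pxy orbT.
Qed.

Section GreedyListColouring.

Variables (T C : finType) (e : rel T) (L : T -> {set C}).
Hypotheses (e_sym : symmetric e) (e_irr : irreflexive e).

Definition list_colouring_on (S : {set T}) (f : T -> C) : Prop :=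
  (forall v, v \in S -> f v \in L v) /\ {in S &, forall x y, e x y -> f x != f y}.

Lemma extend_colouring S f v c :
  list_colouring_on S f -> c \in L v -> (forall y, y \in S -> e v y -> c != f y) ->
  list_colouring_on (v |: S) (fun y => if y == v then c else f y).
Proof.
move=> [fL f_ok] cL c_ok; split=> [y|x y].
  by rewrite !inE; case: eqP => [-> | _ yS] //; apply: fL.
rewrite !inE; case: (x =P v) => [->|_]; case: (y =P v) => [->|_] //=.
- by rewrite e_irr.
- by move=> _ yS evy; apply: c_ok.
- by move=> xS _ exv; rewrite eq_sym; apply: c_ok; rewrite // e_sym.
- exact: f_ok.
Qed.

Variables (P : {set T}) (f0 : T -> C) (rank : T -> nat).
Hypothesis f0_ok : list_colouring_on P f0.
Hypothesis few_earlier : forall v, v \notin P ->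
  #|[set y | (y \notin P) && e v y && (rank y <= rank v)]|
    < #|L v :\: f0 @: [set y in P | e v y]|.

Lemma greedy_colouring_on (S : {set T}) :
  [disjoint S & P] -> exists2 f, list_colouring_on (S :|: P) f & {in P, f =1 f0}.
Proof.
have [k] := ubnP #|S|; elim: k S => // k IH S le_S_k dSP.
have [->|[v0 v0S]] := set_0Vmem S; first by exists f0; rewrite ?set0U.
pose v := [arg max_(u > v0 in S) rank u].
have [vS v_max] : v \in S /\ {in S, forall y, rank y <= rank v}.
  by rewrite /v; case: arg_maxnP.
have SnP y : y \in S -> y \notin P by move=> yS; rewrite (disjointFr dSP yS).
have [f f_ok fP] : exists2 f, list_colouring_on (S :\ v :|: P) f & {in P, f =1 f0}.
  apply: IH; first by rewrite (cardsD1 v) vS in le_S_k.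
  by apply: disjointWl dSP; apply: subsetDl.
pose B := f0 @: [set y in P | e v y]; pose N := [set y in S :\ v | e v y].
have [c] : exists c, c \in (L v :\: B) :\: f @: N.
  apply/set0Pn; rewrite -card_gt0 cardsD subn_gt0.
  apply: leq_ltn_trans (few_earlier (SnP v vS)).
  apply: leq_trans (subset_leq_card (subsetIr _ _)) _.
  apply: leq_trans (leq_imset_card _ _) (subset_leq_card _).
  apply/subsetP => y; rewrite !inE => /andP[/andP[_ yS] evy].
  by rewrite evy v_max // SnP.
rewrite !inE => /andP[c_notN /andP[c_notB cL]].
exists (fun y => if y == v then c else f y); last first.
  by move=> y yP; case: eqP => [yv|_]; [move: (SnP v vS); rewrite -yv yP | apply: fP].
rewrite -(setD1K vS) -setUA; apply: extend_colouring => // y.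
rewrite inE => /orP[yS|yP] evy.
  by apply: contraNneq c_notN => ->; apply/imsetP; exists y; rewrite // inE yS.
by rewrite fP //; apply: contraNneq c_notB => ->; apply/imsetP; exists y; rewrite // inE yP.
Qed.

Lemma greedy_colouring :
  exists f : T -> C, (forall v, f v \in L v) /\ (forall x y, e x y -> f x != f y).
Proof.
have [|f [fL f_ok] _] := @greedy_colouring_on (~: P); first by rewrite disjoints_subset.
have inSP v : v \in ~: P :|: P by rewrite setUC setUCr inE.
by exists f; split=> [v|x y]; [apply: fL | apply: f_ok].
Qed.

End GreedyListColouring.

Lemma card_setU_leq (T : finType) (A B : {set T}) a b :
  #|A| <= a -> #|B| <= b -> #|A :|: B| <= a + b.
Proof. by move=> le_A le_B; apply: leq_trans (leq_card_setU A B) (leq_add le_A le_B). Qed.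

Lemma choose_two_colours (C : finType) (A B D : {set C}) :
  A != set0 -> B != set0 -> #|D| <= #|B| ->
  exists p q, [/\ p \in A, q \in B & #|D :&: [set p; q]| <= 1].
Proof.
move=> /set0Pn[a aA] /set0Pn[b bB] le_DB.
have one_outside p q : p \notin D -> #|D :&: [set p; q]| <= 1.
  move=> pD; rewrite -(cards1 q); apply: subset_leq_card; apply/subsetP => z.
  by rewrite !inE => /andP[zD /orP[/eqP zp|//]]; move: pD; rewrite -zp zD.
have [[c]|AB0] := set0Pn (A :&: B).
  rewrite inE => /andP[cA cB]; exists c, c; split=> //.
  by rewrite setUid (leq_trans (subset_leq_card (subsetIr _ _))) ?cards1.
have [BD|/subsetPn[c cB cD]] := boolP (B \subset D); last first.
  by exists a, c; split; rewrite // setUC one_outside.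
have B_eq_D : B = D by apply/eqP; rewrite eqEcard BD le_DB.
exists a, b; split; rewrite // one_outside // -B_eq_D.
by apply/negP => aB; apply: AB0; exists a; rewrite inE aA.
Qed.

Lemma theta_lens_internal (m : nat) (i : 'I_m) (j : 'I_(theta_lens i).-1) :
  if i == 0 :> nat then j = 0 :> nat else j < 3.
Proof. by case: j; rewrite /theta_lens; case: (i == 0 :> nat) => // [[]]. Qed.

Inductive role := ru | rw | rx | ra | rb | rc.

Definition role_code (r : role) : nat :=
  match r with ru => 0 | rw => 1 | rx => 2 | ra => 3 | rb => 4 | rc => 5 end.
Definition role_of_code (k : nat) : role :=
  match k with 0 => ru | 1 => rw | 2 => rx | 3 => ra | 4 => rb | _ => rc end.
Lemma role_codeK : cancel role_code role_of_code. Proof. by case. Qed.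
HB.instance Definition _ := Equality.copy role (can_type role_codeK).

Definition on_short_path (r : role) : bool :=
  match r with ru | rw | rx => true | _ => false end.

Definition hadj_roles (r : role) (i : nat) (s : role) (j : nat) : bool :=
  match r, s with
  | ru, (rx | ra) | (rx | ra), ru | rw, (rx | rc) | (rx | rc), rw => true
  | ra, rb | rb, ra | rb, rc | rc, rb => i == j
  | _, _ => false
  end.

(* Adjacency in G' (or equality): u sees w, x, a, b; w sees x, b, c; x sees
   a, c; a, b, c see each other on the same path; equal roles always clash. *)
Definition conflict_one (r : role) (i : nat) (s : role) (j : nat) : bool :=
  match r, s with
  | ru, (rw | rx | ra | rb) | rw, (rx | rb | rc) | rx, (ra | rc) => true
  | ra, (rb | rc) | rb, rc => i == j
  | _, _ => false
  end.

Definition conflict_roles (r : role) (i : nat) (s : role) (j : nat) : bool :=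
  [|| r == s, conflict_one r i s j | conflict_one s j r i].

Lemma hadj_conflict r i s j : hadj_roles r i s j -> conflict_roles r i s j.
Proof. by rewrite /conflict_roles; case: r; case: s => //= /eqP->; rewrite eqxx ?orbT. Qed.

Lemma hadj2_conflict r i t k s j :
  hadj_roles r i t k -> hadj_roles t k s j -> conflict_roles r i s j.
Proof.
rewrite /conflict_roles.
by case: r; case: t; case: s => //= /eqP-> /eqP->; rewrite eqxx.
Qed.

(* The part of a role: Some false near u, Some true near w, None in the middle. *)
Definition side (r : role) : option bool :=
  match r with ru | rx | ra => Some false | rw | rc => Some true | rb => None end.

Lemma same_side_conflict r i s j : side r = side s -> conflict_roles r i s j.
Proof. by case: r; case: s. Qed.

Definition precoloured_role (r : role) (i : nat) : bool := (r == rx) || (r == rb) && (i == 1).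

Definition rank_role (r : role) (i : nat) : nat :=
  match r with
  | rx | rb => 0 | ru => 1 | rw => 2
  | ra => if i == 1 then 5 else 3
  | rc => if i == 1 then 6 else 4
  end.

Section ThetaSquare.

Variable n : nat.
Local Notation m := n.+4.+1.
Local Notation V := (theta_V (@theta_lens m)).
Local Notation H := (@theta_adj m (@theta_lens m)).

(* Role and path index of a vertex; u, w and x lie on path 0. *)
Definition role_of (v : V) : role :=
  match v with
  | inl b => if b then rw else ru
  | inr p => if val (tag p) == 0 then rx
             else match val (tagged p) with 0 => ra | 1 => rb | _ => rc end
  end.

Definition path_of (v : V) : nat := if v is inr p then val (tag p) else 0.

Lemma path_of_lt v : path_of v < m.
Proof. by case: v => [b|[i j]] //=. Qed.

Lemma path_of_eq0 v : (path_of v == 0) = on_short_path (role_of v).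
Proof. by case: v => [[]|[i j]] //=; case: eqP => //= _; case: (nat_of_ord j) => [|[]]. Qed.

Lemma role_path_inj (v y : V) : role_of v = role_of y -> path_of v = path_of y -> v = y.
Proof.
case: v => [[]|[i j]]; case: y => [[]|[i' j']] //=;
  try by case: (_ == 0) => //; case: (nat_of_ord _) => [|[]].
move=> same_role /ord_inj same_path; subst i'; congr (inr (Tagged _ _)).
apply: ord_inj; have := theta_lens_internal j; have := theta_lens_internal j'.
move: same_role; case: eqP => _; first by move=> _ -> ->.
by case: (nat_of_ord j) => [|[|[|]]]; case: (nat_of_ord j') => [|[|[|]]].
Qed.

Lemma theta_adj_roles v y :
  H v y -> hadj_roles (role_of v) (path_of v) (role_of y) (path_of y).
Proof.
case: v => [a|[i j]]; case: y => [b|[i' j']] /=.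
- by case/andP=> _ /existsP[k]; rewrite /theta_lens; case: ifP.
- rewrite /theta_end_adj /=; move: (nat_of_ord j') (theta_lens_internal j') => k.
  by rewrite /theta_lens; case: a; case: eqP => //= _; case: k => [|[|[|]]].
- rewrite /theta_end_adj /=; move: (nat_of_ord j) (theta_lens_internal j) => k.
  by rewrite /theta_lens; case: b; case: eqP => //= _; case: k => [|[|[|]]].
- case/andP=> /eqP /= same_path; subst i'.
  have := theta_lens_internal j; have := theta_lens_internal j'.
  case: eqP => _ /=; first by move=> -> ->.
  by case: (nat_of_ord j) => [|[|[|]]]; case: (nat_of_ord j') => [|[|[|]]] //= *; rewrite eqxx.
Qed.

Lemma theta_adj_sym : symmetric H.
Proof. by move=> [a|p] [b|q] //=; rewrite eq_sym // orbC. Qed.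

Definition conflict : rel V := with_part_cliques (graph_sq H) (fun v => side (role_of v)).

Lemma conflict_sym : symmetric conflict.
Proof. exact/with_part_cliques_sym/graph_sq_sym/theta_adj_sym. Qed.

Lemma conflict_irr : irreflexive conflict.
Proof. exact/with_part_cliques_irr/graph_sq_irr. Qed.

Lemma conflict_roles_of x y :
  conflict x y -> conflict_roles (role_of x) (path_of x) (role_of y) (path_of y).
Proof.
case/orP=> [/andP[_ /orP[/theta_adj_roles/hadj_conflict //|]] | /andP[_ /eqP]].
  case/existsP=> z /andP[/theta_adj_roles h1 /theta_adj_roles h2].
  exact: hadj2_conflict h1 h2.
exact: same_side_conflict.
Qed.

Definition precoloured : {set V} := [set v | precoloured_role (role_of v) (path_of v)].
Definition rank (v : V) : nat := rank_role (role_of v) (path_of v).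

Definition single (r : role) (k : nat) : {set V} :=
  [set y | (role_of y == r) && (path_of y == k)].
Definition others (r : role) (i : nat) : {set V} :=
  [set y | (role_of y == r) && (path_of y \notin [:: 0; 1; i])].
Definition b_sibling (i : nat) : {set V} := if i == 1 then set0 else single rb i.

Definition earlier_cover (r : role) (i : nat) : {set V} :=
  match r with
  | ru | rb => others rb i
  | rw => single ru 0 :|: others rb i
  | ra => single ru 0 :|: b_sibling i :|: others ra i
  | rc => single rw 0 :|: single ra i :|: b_sibling i :|: others rc i
  | rx => set0
  end.

Lemma earlier_in_cover v y :
  v \notin precoloured -> y \notin precoloured -> v != y -> conflict v y ->
  rank y <= rank v -> y \in earlier_cover (role_of v) (path_of v).
Proof.
rewrite !inE /rank => v_pre y_pre nvy /conflict_roles_of vy le_rank.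
have new : ~~ ((role_of v == role_of y) && (path_of v == path_of y)).
  by apply: contra nvy => /andP[/eqP r_eq /eqP p_eq]; rewrite (role_path_inj r_eq p_eq).
have := path_of_eq0 v; have := path_of_eq0 y.
rewrite /earlier_cover /b_sibling; move: (role_of v) (path_of v) v_pre new vy le_rank => r i.
case: r; rewrite ?inE; try case: (i =P 1) => [->|/eqP i_ne1]; rewrite ?inE.
all: move: (role_of y) (path_of y) y_pre => s j; case: s => //=.
all: rewrite /conflict_roles /precoloured_role /=.
all: by case: (j =P 1) => [->|/eqP j_ne1] /=; try rewrite (negbTE i_ne1); lia.
Qed.

Lemma card_single r k : #|single r k| <= 1.
Proof.
apply/card_le1_eqP => x y; rewrite !inE => /andP[/eqP x_r /eqP x_k] /andP[/eqP y_r /eqP y_k].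
by apply: role_path_inj; rewrite ?x_r ?y_r ?x_k ?y_k.
Qed.

Lemma card_b_sibling i : #|b_sibling i| <= (i != 1).
Proof. by rewrite /b_sibling; case: eqP => _; [rewrite cards0 | apply: card_single]. Qed.

Lemma card_low_indices i : i < m -> 2 + (1 < i) <= #|[set j : 'I_m | val j \in [:: 0; 1; i]]|.
Proof.
move=> lt_i_m; apply: (@leq_trans #|[set ord0; @Ordinal m 1 isT; Ordinal lt_i_m]|).
  by rewrite setUC cardsU1 cards2 !inE -!val_eqE /=; case: i lt_i_m => [|[|]].
by apply/subset_leq_card/subsetP => j; rewrite !inE -!val_eqE /= -orbA.
Qed.

Lemma card_others r i : i < m -> #|others r i| <= m - 2 - (1 < i).
Proof.
move=> lt_i_m; pose idx (y : V) : 'I_m := Ordinal (path_of_lt y).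
rewrite -(card_in_imset (f := idx)); last first.
  move=> x y; rewrite !inE => /andP[/eqP x_r _] /andP[/eqP y_r _] /(congr1 val) /= same_path.
  by apply: role_path_inj; rewrite ?x_r ?y_r.
set low := [set j : 'I_m | val j \in [:: 0; 1; i]].
apply: (@leq_trans #|~: low|).
  apply/subset_leq_card/subsetP => j /imsetP[y]; rewrite !inE => /andP[_ y_high] ->.
  by rewrite /= y_high.
have := cardsC low; have := card_low_indices lt_i_m.
by rewrite -/low card_ord; case: (1 < i) => /=; lia.
Qed.

Lemma card_earlier_cover v :
  v \notin precoloured -> #|earlier_cover (role_of v) (path_of v)| <= m - (role_of v != rc).
Proof.
rewrite inE /precoloured_role; have lt_i_m := path_of_lt v; have short := path_of_eq0 v.
move: (role_of v) (path_of v) lt_i_m short => r i lt_i_m short.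
have one := card_single; have rest := card_others _ lt_i_m; have sib := card_b_sibling i.
case: r short => /= short not_pre; rewrite /earlier_cover.
- by apply: leq_trans (rest _) _; lia.
- by apply: leq_trans (card_setU_leq (one _ _) (rest _)) _; lia.
- by [].
- by apply: leq_trans (card_setU_leq (card_setU_leq (one _ _) sib) (rest _)) _; lia.
- by apply: leq_trans (rest _) _; lia.
- apply: leq_trans (card_setU_leq (card_setU_leq (card_setU_leq (one _ _) (one _ _)) sib)
    (rest _)) _.
  lia.
Qed.

Definition vertex_at (i : 'I_m) (j : 'I_(theta_lens i).-1) : V :=
  inr (Tagged (fun i => 'I_(theta_lens i).-1) j).
Definition x_vertex : V := @vertex_at ord0 (@Ordinal 1 0 isT).
Definition b1_vertex : V := @vertex_at (@Ordinal m 1 isT) (@Ordinal 3 1 isT).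
Definition c1_vertex : V := @vertex_at (@Ordinal m 1 isT) (@Ordinal 3 2 isT).

Lemma x_vertex_unique (y : V) : role_of y = rx -> y = x_vertex.
Proof. by move=> y_x; apply: role_path_inj => //; apply/eqP; rewrite path_of_eq0 y_x. Qed.

Lemma b1_vertex_unique (y : V) : role_of y = rb -> path_of y = 1 -> y = b1_vertex.
Proof. by move=> y_r y_i; apply: role_path_inj; rewrite ?y_r ?y_i. Qed.

Lemma c1_vertex_unique (y : V) : role_of y = rc -> path_of y = 1 -> y = c1_vertex.
Proof. by move=> y_r y_i; apply: role_path_inj; rewrite ?y_r ?y_i. Qed.

Section Precolouring.

Variables (C : finType) (L : V -> {set C}) (p q : C).
Hypothesis sizeL : forall v, #|L v| = m + 2.
Hypotheses (p_x : p \in L x_vertex) (q_b1 : q \in L b1_vertex).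
Hypothesis pq_c1 : #|L c1_vertex :&: [set p; q]| <= 1.

(* x gets p and b_1 gets q; they are not adjacent in G'. *)
Definition precolouring (y : V) : C := if role_of y == rx then p else q.

Lemma precolouring_ok : list_colouring_on conflict L precoloured precolouring.
Proof.
split=> [v|x y]; rewrite !inE /precoloured_role /precolouring.
  case: eqP => [/x_vertex_unique-> // | _ /= /andP[/eqP v_b /eqP v_1]].
  by rewrite (b1_vertex_unique v_b v_1).
move=> x_pre y_pre xy; have nxy : x != y by apply: contraTneq xy => ->; rewrite conflict_irr.
move: (conflict_roles_of xy) nxy x_pre y_pre.
case: (role_of x =P rx) => [x_x|_]; case: (role_of y =P rx) => [y_x|_] /=.
- by rewrite (x_vertex_unique x_x) (x_vertex_unique y_x) eqxx.
- move=> xy_roles _ _ /andP[/eqP y_b /eqP y_1].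
  by move: xy_roles; rewrite x_x y_b y_1 /conflict_roles.
- move=> xy_roles _ /andP[/eqP x_b /eqP x_1] _.
  by move: xy_roles; rewrite y_x x_b x_1 /conflict_roles.
- move=> _ + /andP[/eqP x_b /eqP x_1] /andP[/eqP y_b /eqP y_1].
  by rewrite (b1_vertex_unique x_b x_1) (b1_vertex_unique y_b y_1) eqxx.
Qed.

(* The degeneracy condition of greedy_colouring: precoloured neighbours
   remove at most two colours, and at most one from the list of any c_i. *)
Lemma few_earlier_neighbours v : v \notin precoloured ->
  #|[set y | (y \notin precoloured) && conflict v y && (rank y <= rank v)]|
    < #|L v :\: precolouring @: [set y in precoloured | conflict v y]|.
Proof.
move=> v_pre; set R := precolouring @: _.
have earlier_sub : [set y | (y \notin precoloured) && conflict v y && (rank y <= rank v)]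
    \subset earlier_cover (role_of v) (path_of v).
  apply/subsetP => y; rewrite !inE => /andP[/andP[y_pre vy] le_rank].
  apply: earlier_in_cover => //; first by rewrite inE.
  by apply: contraTneq vy => <-; rewrite conflict_irr.
apply: leq_ltn_trans (subset_leq_card earlier_sub) _.
apply: leq_ltn_trans (card_earlier_cover v_pre) _.
suff : #|L v :&: R| <= 1 + (role_of v != rc) by rewrite cardsD sizeL; lia.
have R_pq : R \subset [set p; q].
  apply/subsetP => _ /imsetP[y _ ->]; rewrite /precolouring !inE.
  by case: ifP; rewrite eqxx ?orbT.
case: (role_of v =P rc) => [v_c|_] /=; last first.
  apply: leq_trans (subset_leq_card (subsetIr _ _)) _.
  by apply: leq_trans (subset_leq_card R_pq) _; rewrite cards2 ltnS leq_b1.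
case: (path_of v =P 1) => [v_1|v_n1].
  apply: leq_trans pq_c1 => /=; rewrite -(c1_vertex_unique v_c v_1).
  exact/subset_leq_card/setIS.
apply: leq_trans (subset_leq_card (subsetIr _ _)) _; rewrite addn0 -(cards1 p).
apply/subset_leq_card/subsetP => c /imsetP[y]; rewrite !inE /precolouring.
move=> /andP[y_pre /conflict_roles_of]; rewrite v_c => vy ->; case: ifP => // y_nx.
move: y_pre vy; rewrite /precoloured_role y_nx => /andP[/eqP-> /eqP->].
by rewrite /conflict_roles /= => /eqP/esym/v_n1.
Qed.

End Precolouring.

Lemma conflict_list_colourable (C : finType) (L : V -> {set C}) :
  (forall v, #|L v| = m + 2) ->
  exists f, (forall v, f v \in L v) /\ (forall x y, conflict x y -> f x != f y).
Proof.
move=> sizeL; have nonempty v : L v != set0 by rewrite -card_gt0 sizeL.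
have [|p [q [p_x q_b1 pq_c1]]] := choose_two_colours (nonempty x_vertex)
  (nonempty b1_vertex) (_ : #|L c1_vertex| <= _); first by rewrite !sizeL.
apply: (greedy_colouring conflict_sym conflict_irr (precolouring_ok p_x q_b1)).
exact: few_earlier_neighbours.
Qed.

End ThetaSquare.

Lemma card_theta_V (m : nat) : #|theta_V (@theta_lens m.+1)| = 3 * m.+1.
Proof.
rewrite card_sum card_bool card_tagged sumnE big_map big_enum /= big_ord_recl /=.
by rewrite (eq_bigr (fun _ => 3)) ?sum_nat_const ?card_ord //; lia.
Qed.

Theorem lemma3p7 (m : nat) (hm : 5 <= m) :
  equitably_choosable (graph_sq (@theta_adj m (@theta_lens m))) (m + 2).
Proof.
case: m hm => [|[|[|[|[|n]]]]] // _.
apply: (@equitable_of_part_colouring _ _ _ (fun v => side (role_of v))).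
  by rewrite card_option card_bool /ceil_div card_theta_V leq_divRL //; lia.
exact: conflict_list_colourable.
Qed.
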